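(* Let $O^4$ be the set of odd-parity 4-bit strings, let $u\in O^4$ and let $u'$ be its bitwise complement ($u\oplus u'=1111$). Let $n\ge1$ and let four parties (the first being Alice) hold $X_j=(x^j_1,\dots,x^j_n)\in\{0,1\}^n$, $j=1,\dots,4$, under the promise that $x_i^1x_i^2x_i^3x_i^4\in A$ for all $i$, where $A\subseteq O^4$ is any fixed set. Let $f_{\{u,u'\}}(X_1,X_2,X_3,X_4)=\bigoplus_{i=1}^n\big(t_u(x_i^1x_i^2x_i^3x_i^4)\oplus t_{u'}(x_i^1x_i^2x_i^3x_i^4)\big)$, where $t_w(y)=1$ if $y=w$ and $0$ otherwise. Suppose the parties share $n$ copies of $|\psi_4\rangle=2^{-3/2}\big(\sum_{|v|=1}|v\rangle-\sum_{|v|=3}|v\rangle\big)$ ($v\in\{0,1\}^4$, $|v|$ the Hamming weight), the $j$-th qubit of each copy held by party $j$. Then, using local operations in which party $j$ applies $H$ to its qubit of the $i$-th copy if $x_i^j\ne u_j$ and the identity otherwise, followed by computational-basis measurements and local classical computation, Alice can obtain $f_{\{u,u'\}}(X_1,X_2,X_3,X_4)$ with only three classical bits of communication in total.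
   Context: $H$ is the Hadamard gate. Communication consists only of classical bits sent to Alice; no quantum communication is allowed. *)

From HB Require Import structures.
From mathcomp Require Import all_boot all_order all_algebra.
From mathcomp Require Import Rstruct.
Set Implicit Arguments. Unset Strict Implicit. Unset Printing Implicit Defensive.
Import Order.TTheory GRing.Theory Num.Theory.
Local Open Scope ring_scope.

Notation RR := Rdefinitions.R.

(* 4-bit strings; bit j belongs to party j (party 0 = Alice). *)
Definition bits4 := {ffun 'I_4 -> bool}.

Definition weight (v : bits4) : nat := #|[pred j | v j]|.
Definition odd4 (v : bits4) : bool := odd (weight v).

Definition compl4 (u : bits4) : bits4 := [ffun j => ~~ u j].

Definition t (w y : bits4) : bool := y == w.

Definition column n (X : 'I_4 -> 'I_n -> bool) (i : 'I_n) : bits4 :=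
  [ffun j => X j i].

Definition f_uu n (u : bits4) (X : 'I_4 -> 'I_n -> bool) : bool :=
  \big[addb/false]_(i < n) (t u (column X i) (+) t (compl4 u) (column X i)).

Definition psi4 (v : bits4) : RR :=
  if weight v == 1%N then (2 * Num.sqrt 2)^-1
  else if weight v == 3%N then - (2 * Num.sqrt 2)^-1
  else 0.

(* matrix entry <b| H |a> of the Hadamard gate *)
Definition hadamard (a b : bool) : RR :=
  (if a && b then -1 else 1) / Num.sqrt 2.

Definition gate (applyH : bool) (a b : bool) : RR :=
  if applyH then hadamard a b else (a == b)%:R.

(* Amplitude of computational-basis outcome m on one copy of psi4, after
   party j applies H iff y_j <> u_j (the local operations of the protocol). *)
Definition copy_amp (u y m : bits4) : RR :=
  \sum_(v : bits4) (\prod_(j < 4) gate (y j != u j) (v j) (m j)) * psi4 v.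

(* Probability that, on the n-copy product state with inputs X, the
   computational-basis measurements give outcomes M (M j i = outcome of
   party j on its qubit of copy i). The amplitude of the tensor-product
   state is the product of the per-copy amplitudes. *)
Definition outcome_prob n (u : bits4) (X M : 'I_4 -> 'I_n -> bool) : RR :=
  \prod_(i < n) (copy_amp u (column X i) (column M i)) ^+ 2.

From HB Require Import structures.
From mathcomp Require Import all_boot all_order all_algebra Rstruct ring.
Import Order.TTheory GRing.Theory Num.Theory.
Local Open Scope ring_scope.

(* Party j applies H exactly where its bit differs from u_j, so on copy i the
   set of Hadamard-rotated qubits is s = x_i (+) u, of even weight since x_i and
   u are both odd.  Rotating an even set S of qubits of psi4 gives a state
   supported on odd-weight strings if S is empty or everything (H^{(x)4} psi4 is
   again odd-supported), and on even-weight strings if |S| = 2.  Hence every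
   possible outcome of copy i has parity t_u(x_i) (+) t_u'(x_i), and f is the
   XOR of all 4n outcome bits: parties 2, 3, 4 each send the XOR of their own
   outcomes, and Alice adds hers. *)

Definition bits4_of (a b c d : bool) : bits4 :=
  [ffun j : 'I_4 => nth false [:: a; b; c; d] j].

Definition bits4_coords (v : bits4) : bool * bool * bool * bool :=
  (v ord0, v (inord 1), v (inord 2), v (inord 3)).

Lemma bits4_of_coords (v : bits4) :
  bits4_of (v ord0) (v (inord 1)) (v (inord 2)) (v (inord 3)) = v.
Proof.
apply/ffunP=> -[[|[|[|[|j]]]] lt_j4] //=; rewrite ffunE /=;
  by congr (v _); apply/val_inj; rewrite /= ?inordK.
Qed.

Lemma bits4_ofK a b c d : bits4_coords (bits4_of a b c d) = (a, b, c, d).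
Proof. by rewrite /bits4_coords !ffunE /= !inordK. Qed.

Lemma eq_bits4_of a b c d a' b' c' d' :
  (bits4_of a b c d == bits4_of a' b' c' d') = [&& a == a', b == b', c == c' & d == d'].
Proof.
apply/eqP/and4P => [/(congr1 bits4_coords) | [/eqP-> /eqP-> /eqP-> /eqP->] //].
by rewrite !bits4_ofK => -[-> -> -> ->].
Qed.

Lemma bits4_of_const (e : bool) : [ffun=> e] = bits4_of e e e e.
Proof. by apply/ffunP=> -[[|[|[|[|j]]]] lt_j4]; rewrite !ffunE. Qed.

Variant bits4_spec : bits4 -> Type := Bits4 a b c d : bits4_spec (bits4_of a b c d).

Lemma bits4P (v : bits4) : bits4_spec v.
Proof. by rewrite -(bits4_of_coords v). Qed.

Lemma big_bits4 (R : Type) (idx : R) (op : Monoid.com_law idx) (F : bits4 -> R) :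
  \big[op/idx]_(v : bits4) F v =
  \big[op/idx]_(a : bool) \big[op/idx]_(b : bool) \big[op/idx]_(c : bool)
    \big[op/idx]_(d : bool) F (bits4_of a b c d).
Proof.
pose of_quad (p : bool * bool * bool * bool) := let: (a, b, c, d) := p in bits4_of a b c d.
rewrite (reindex of_quad) /=; last first.
  exists bits4_coords => [[[[a b] c] d] _ | v _]; first exact: bits4_ofK.
  exact: bits4_of_coords.
by rewrite !pair_bigA; apply: eq_bigr => -[[[a b] c] d].
Qed.

Lemma weightE (v : bits4) : weight v = (\sum_(j < 4) v j)%N.
Proof.
rewrite /weight -sum1_card big_mkcond.
by apply: eq_bigr => j _; rewrite inE; case: (v j).
Qed.

Lemma weight_bits4_of a b c d : weight (bits4_of a b c d) = (a + b + c + d)%N.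
Proof. by rewrite weightE !big_ord_recl big_ord0 !ffunE /= addn0 !addnA. Qed.

Lemma odd4E (v : bits4) : odd4 v = \big[addb/false]_(j < 4) v j.
Proof.
rewrite /odd4 weightE (big_morph odd oddD erefl).
by apply: eq_bigr => j _; rewrite oddb.
Qed.

Definition hadamard_amp (s m : bits4) : RR :=
  \sum_(v : bits4) (\prod_(j < 4) gate (s j) (v j) (m j)) * psi4 v.

Lemma hadamard_amp_parity (s m : bits4) :
  ~~ odd4 s -> hadamard_amp s m != 0 ->
  odd4 m = (s == [ffun=> false]) (+) (s == [ffun=> true]).
Proof.
case: s / bits4P => s0 s1 s2 s3; case: m / bits4P => m0 m1 m2 m3.
rewrite !bits4_of_const !eq_bits4_of /hadamard_amp big_bits4 !big_bool.
rewrite /psi4 /odd4 !weight_bits4_of /=.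
rewrite !big_ord_recl !big_ord0 !ffunE /= /gate /hadamard.
by case: s0; case: s1; case: s2; case: s3; case: m0; case: m1; case: m2; case: m3 => //= _;
  apply: contraNeq => _; apply/eqP; ring.
Qed.

Definition xor4 (y u : bits4) : bits4 := [ffun j => y j (+) u j].

Lemma odd4_xor (y u : bits4) : odd4 (xor4 y u) = odd4 y (+) odd4 u.
Proof. by rewrite !odd4E -big_split; apply: eq_bigr => j _; rewrite ffunE. Qed.

Lemma xor4_eq_const (y u : bits4) (e : bool) :
  (xor4 y u == [ffun=> e]) = (y == [ffun j => u j (+) e]).
Proof.
apply/eqP/eqP => /ffunP eq_yu; apply/ffunP => j; move: (eq_yu j); rewrite !ffunE.
  by move <-; rewrite addbC addbK.
by move ->; rewrite addbC addKb.
Qed.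

Lemma copy_ampE (u y m : bits4) : copy_amp u y m = hadamard_amp (xor4 y u) m.
Proof.
apply: eq_bigr => v _; congr (_ * _); apply: eq_bigr => j _.
by rewrite ffunE negb_eqb.
Qed.

Lemma copy_amp_parity (u y m : bits4) :
  odd4 u -> odd4 y -> copy_amp u y m != 0 -> odd4 m = t u y (+) t (compl4 u) y.
Proof.
move=> odd_u odd_y; rewrite copy_ampE => /hadamard_amp_parity ->; last first.
  by rewrite odd4_xor odd_u odd_y.
rewrite !xor4_eq_const /t; congr ((y == _) (+) (y == _)).
  by apply/ffunP => j; rewrite ffunE addbF.
by apply/ffunP => j; rewrite !ffunE addbT.
Qed.

Lemma copy_amp_neq0 n (u : bits4) (X M : 'I_4 -> 'I_n -> bool) (i : 'I_n) :
  outcome_prob u X M != 0 -> copy_amp u (column X i) (column M i) != 0.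
Proof. by move/prodf_neq0/(_ i isT); apply: contraNneq => ->; rewrite expr0n. Qed.

Definition parity {n : nat} (b : 'I_n -> bool) : bool := \big[addb/false]_(i < n) b i.

Lemma parity_odd4_column n (M : 'I_4 -> 'I_n -> bool) :
  parity (fun i => odd4 (column M i)) =
  parity (M ord0) (+) parity (M (inord 1)) (+) parity (M (inord 2)) (+) parity (M (inord 3)).
Proof.
rewrite /parity; under eq_bigr => i _ do rewrite odd4E.
rewrite exchange_big !big_ord_recl big_ord0 /= addbF !addbA.
congr (_ (+) _ (+) _ (+) _); apply: eq_bigr => i _; rewrite ffunE;
  by congr (M _ i); apply/val_inj; rewrite /= inordK.
Qed.

Theorem corollary1 (u : bits4) (A : {set bits4}) (n : nat) :
  odd4 u ->
  (forall a, a \in A -> odd4 a) ->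
  (0 < n)%N ->
  exists (k1 k2 k3 : nat), (k1 + k2 + k3 = 3)%N /\
  exists (g1 : ('I_n -> bool) -> ('I_n -> bool) -> k1.-tuple bool)
         (g2 : ('I_n -> bool) -> ('I_n -> bool) -> k2.-tuple bool)
         (g3 : ('I_n -> bool) -> ('I_n -> bool) -> k3.-tuple bool)
         (dec : ('I_n -> bool) -> ('I_n -> bool) ->
                k1.-tuple bool -> k2.-tuple bool -> k3.-tuple bool -> bool),
  forall X M : 'I_4 -> 'I_n -> bool,
    (forall i : 'I_n, column X i \in A) ->
    outcome_prob u X M != 0 ->
    dec (X ord0) (M ord0)
        (g1 (X (inord 1)) (M (inord 1)))
        (g2 (X (inord 2)) (M (inord 2)))
        (g3 (X (inord 3)) (M (inord 3)))
    = f_uu u X.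
Proof.
move=> odd_u odd_A _.
pose send (_ m : 'I_n -> bool) := [tuple parity m].
exists 1%N, 1%N, 1%N; split=> //; exists send, send, send.
exists (fun _ m p1 p2 p3 => parity m (+) thead p1 (+) thead p2 (+) thead p3).
move=> X M X_A M_nz; rewrite !theadE -parity_odd4_column.
apply: eq_bigr => i _; apply: copy_amp_parity => //; first exact: odd_A.
exact: copy_amp_neq0.
Qed.
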